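(* Fix integers $a,b\ge 2$, $\varepsilon>0$, and a family $\mathcal{T}$ of $a$-element multisets with elements in $[b]$. Let $n\to\infty$ and let $m=m(n)$ satisfy $m/n\to\infty$. For each $n$, let $C_M$ be a coloring $[n]\to[b]$ maximizing $p^C(\mathcal{T})$. Then all hypergraphs $H\in\mathcal{H}(a,n,m)$, except for $o\!\left(\binom{\binom{n}{a}}{m}\right)$ of them, satisfy $q(H)\le p^{C_M}(\mathcal{T})\,m\,(1+\varepsilon)$.
   Context: $\mathcal{H}(a,n,m)$ is the family of all $a$-uniform hypergraphs on vertex set $[n]$ with exactly $m$ hyperedges; $|\mathcal{H}(a,n,m)|=\binom{\binom{n}{a}}{m}$. A coloring $C:[n]\to[b]$ is an arbitrary map. For a coloring $C$, $n_j^C$ is the number of vertices of color $j$; the color multiset of a hyperedge $e$ is the multiset of colors $C(v)$, $v\in e$, with multiplicity. For an $a$-element multiset $T$, $I_T(j)$ is the multiplicity of $j$ in $T$ and $p^C(T)=\prod_{j=1}^b\binom{n_j^C}{I_T(j)}\big/\binom{n}{a}$; and $p^C(\mathcal{T})=\sum_{T\in\mathcal{T}}p^C(T)$. For $H\in\mathcal{H}(a,n,m)$, $q(H)$ is the maximum, over all colorings $C:[n]\to[b]$, of the number of hyperedges of $H$ whose color multiset with respect to $C$ belongs to $\mathcal{T}$ (equivalently, the largest number of hyperedges in a subhypergraph of $H$ admitting a $b$-coloring in which every hyperedge's color multiset lies in $\mathcal{T}$). *)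

From mathcomp Require Import all_boot all_order all_algebra.
From mathcomp Require Import reals.
Set Implicit Arguments. Unset Strict Implicit. Unset Printing Implicit Defensive.
Import Order.TTheory GRing.Theory Num.Theory.

(* Vertex set [n] = 'I_n, colors [b] = 'I_b.
   An a-element multiset over [b] is represented by its multiplicity function
   t : {ffun 'I_b -> 'I_a.+1} (t j = I_T(j)), with \sum_j t j = a. *)
Definition multiset (a b : nat) := {ffun 'I_b -> 'I_a.+1}.

Definition is_amultiset (a b : nat) (t : multiset a b) : bool :=
  \sum_(j < b) (t j : nat) == a.

Definition ncol (n b : nat) (C : {ffun 'I_n -> 'I_b}) (j : 'I_b) : nat :=
  #|[set v | C v == j]|.

Definition pC (R : realType) (a b n : nat) (calT : {set multiset a b})
    (C : {ffun 'I_n -> 'I_b}) : R :=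
  \sum_(t in calT)
     ((\prod_(j < b) ('C(ncol C j, t j))%:R) / ('C(n, a))%:R)%R.

Definition edge_ok (a b n : nat) (calT : {set multiset a b})
    (C : {ffun 'I_n -> 'I_b}) (e : {set 'I_n}) : bool :=
  [exists t in calT, [forall j : 'I_b, (t j : nat) == #|[set v in e | C v == j]| ]].

Definition hypergraphs (a n m : nat) : {set {set {set 'I_n}}} :=
  [set H : {set {set 'I_n}} | [forall e in H, #|e| == a] && (#|H| == m)].

Definition q (a b n : nat) (calT : {set multiset a b}) (H : {set {set 'I_n}}) : nat :=
  \max_(C : {ffun 'I_n -> 'I_b}) #|[set e in H | edge_ok calT C e]|.

From mathcomp Require Import all_boot all_order all_algebra.
From mathcomp Require Import reals.
From mathcomp Require Import zify ring lra.
Import Order.TTheory GRing.Theory Num.Theory.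
Set Implicit Arguments. Unset Strict Implicit. Unset Printing Implicit Defensive.

(* Fix a colouring C and let G be the set of a-sets whose colour multiset lies in T, so that
   |G| <= P |A| for A the set of all a-subsets of [n] and P = p^{C_M}(T).  Counting pairs (S, H)
   with S an r-subset of H :&: G shows that the sum of C(|H :&: G|, r) over all m-edge
   hypergraphs H is at most P^r C(m, r) C(|A|, m), whereas a hypergraph with more than
   (1 + eps) P m edges in G has C(|H :&: G|, r) >= ((1 + eps/2) P)^r C(m, r) as long as
   r <= eps P m / 2.  So at most a fraction (1 + eps/2)^-r of the hypergraphs is bad for C, and a
   union bound over the b^n colourings costs a factor b^n.  An equitable colouring shows that P is
   bounded below by a constant depending on a and b only, so r can be taken proportional to m,
   and since m / n -> oo, (1 + eps/2)^r eventually beats b^n / delta. *)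

Lemma leq_ffact_exp n k : n ^_ k <= n ^ k.
Proof.
have -> : n ^ k = \prod_(i < k) n by rewrite prod_nat_const card_ord.
by rewrite ffact_prod; apply: leq_prod => i _; exact: leq_subr.
Qed.

Lemma leq_exp_ffact q n k : q <= n - k -> q ^ k <= n ^_ k.
Proof.
have -> : q ^ k = \prod_(i < k) q by rewrite prod_nat_const card_ord.
move=> le_q; rewrite ffact_prod; apply: leq_prod => i _.
by apply: leq_trans le_q (leq_sub2l _ (ltnW (ltn_ord i))).
Qed.

Lemma leq_ffact_ratio M N r : M <= N -> N ^ r * M ^_ r <= M ^ r * N ^_ r.
Proof.
have prodE c : c ^ r = \prod_(i < r) c by rewrite prod_nat_const card_ord.
move=> leMN; rewrite !ffact_prod !prodE -!big_split /=.
by apply: leq_prod => i _; rewrite !mulnBr mulnC leq_sub2l // leq_mul2r leMN orbT.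
Qed.

Lemma ffactnD N r k : N ^_ (r + k) = N ^_ r * (N - r) ^_ k.
Proof.
elim: k => [|k IH]; first by rewrite addn0 ffactn0 muln1.
by rewrite addnS !ffactnSr IH subnDA mulnA.
Qed.

Lemma mul_bin_bin N m r :
  r <= m -> 'C(N, m) * 'C(m, r) = 'C(N, r) * 'C(N - r, m - r).
Proof.
move=> le_rm; apply/eqP.
rewrite -(eqn_pmul2r (_ : 0 < r`! * (m - r)`!)) ?muln_gt0 ?fact_gt0 //.
rewrite -mulnA bin_fact // bin_ffact mulnACA !bin_ffact.
by rewrite -ffactnD subnKC.
Qed.

Lemma leq_card_bigcup (I T : finType) (P : pred I) (B : I -> {set T}) :
  #|\bigcup_(i | P i) B i| <= \sum_(i | P i) #|B i|.
Proof.
elim/big_rec2: _ => [|i k U _ leUk]; first by rewrite cards0.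
by rewrite (leq_trans (leq_card_setU _ _).1) ?leq_add2l.
Qed.

Section Draws.
Variable U : finType.

Definition draws (A : {set U}) m := [set H : {set U} | H \subset A & #|H| == m].

Lemma card_draws_supset (A S : {set U}) m : S \subset A ->
  #|[set H in draws A m | S \subset H]| <= 'C(#|A| - #|S|, m - #|S|).
Proof.
move=> sSA; have -> : #|A| - #|S| = #|A :\: S| by rewrite cardsD (setIidPr sSA).
rewrite -cards_draws.
have inj_diffS : {in [set H in draws A m | S \subset H] &, injective (fun H => H :\: S)}.
  move=> H1 H2; rewrite !inE => /andP[_ sSH1] /andP[_ sSH2] eqD.
  by rewrite -(setID H1 S) -(setID H2 S) eqD (setIidPr sSH1) (setIidPr sSH2).
rewrite -(card_in_imset inj_diffS); apply/subset_leq_card/subsetP => D /imsetP[H].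
rewrite !inE => /andP[/andP[sHA /eqP <-] sSH] ->.
by rewrite setSD //= cardsD (setIidPr sSH).
Qed.

Lemma sum_bin_cardI_draws (A G : {set U}) m r : G \subset A ->
  \sum_(H in draws A m) 'C(#|H :&: G|, r) <= 'C(#|G|, r) * 'C(#|A| - r, m - r).
Proof.
move=> sGA.
have binE H : 'C(#|H :&: G|, r) = \sum_(S in draws G r | S \subset H) 1.
  rewrite -cards_draws sum1dep_card; apply: eq_card => S.
  by rewrite /draws !inE subsetI -andbA andbC.
under eq_bigr do rewrite binE.
rewrite (exchange_big_dep (mem (draws G r))) => [|H S _ /andP[] //] /=.
have -> : 'C(#|G|, r) = #|draws G r| by rewrite /draws cards_draws.
rewrite -sum_nat_const.
apply: leq_sum => S; rewrite inE => /andP[sSG /eqP <-].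
rewrite sum1dep_card; apply: leq_trans (card_draws_supset m (subset_trans sSG sGA)).
by apply: subset_leq_card; apply/subsetP => H; rewrite !inE sSG eqxx.
Qed.

End Draws.

Section BinomialEstimates.
Variable R : realFieldType.
Local Open Scope ring_scope.

Lemma ler_bin_ratio (P : R) M N r : (M <= N)%N -> (0 < N)%N ->
  M%:R <= P * N%:R -> 'C(M, r)%:R <= P ^+ r * 'C(N, r)%:R.
Proof.
move=> leMN N_gt0 leMPN.
have N_gt0R : 0 < N%:R :> R by rewrite ltr0n.
have P_ge0 : 0 <= P by rewrite -(pmulr_lge0 _ N_gt0R) (le_trans _ leMPN).
rewrite -(@ler_pM2r _ r`!%:R) ?ltr0n ?fact_gt0 //.
rewrite -(@ler_pM2l _ (N ^ r)%:R) ?ltr0n ?expn_gt0 ?N_gt0 //.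
rewrite -mulrA -!natrM !bin_ffact; apply: le_trans (_ : (M ^ r * N ^_ r)%:R <= _).
  by rewrite ler_nat leq_ffact_ratio.
rewrite natrM mulrA !natrX -exprMn ler_wpM2r ?ler0n //.
by rewrite lerXn2r ?nnegrE ?mulr_ge0 ?ler0n // mulrC.
Qed.

Lemma ler_bin_scale (c : R) m X k : 0 <= c -> c * m%:R + k%:R <= X%:R ->
  c ^+ k * 'C(m, k)%:R <= 'C(X, k)%:R.
Proof.
move=> c_ge0 lecmkX.
rewrite -(@ler_pM2r _ k`!%:R) ?ltr0n ?fact_gt0 // -mulrA -!natrM !bin_ffact.
have leiX (i : 'I_k) : (i <= X)%N.
  apply: leq_trans (ltnW (ltn_ord i)) _; rewrite -(ler_nat R).
  by apply: le_trans lecmkX; rewrite lerDr mulr_ge0.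
rewrite !ffact_prod !natr_prod -[k in c ^+ k]card_ord -prodr_const -big_split /=.
apply: ler_prod => i _; rewrite mulr_ge0 ?ler0n //= [(X - i)%:R]natrB ?leiX //.
apply: le_trans (_ : c * m%:R <= _); first by rewrite ler_wpM2l // ler_nat leq_subr.
rewrite lerBrDr; apply: le_trans lecmkX; by rewrite lerD2l ler_nat ltnW.
Qed.

Lemma card_rich_draws (U : finType) (A G : {set U}) m r (P eps : R) :
  G \subset A -> (0 < #|A|)%N -> 0 < P -> 0 < eps -> #|G|%:R <= P * #|A|%:R ->
  (r <= m)%N -> r%:R <= eps * P * m%:R / 2 ->
  (1 + eps / 2) ^+ r * #|[set H in draws A m | P * m%:R * (1 + eps) < #|H :&: G|%:R]|%:R
    <= 'C(#|A|, m)%:R.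
Proof.
move=> sGA A_gt0 P_gt0 eps_gt0 leGPA le_rm le_r.
set rich := [set H in draws A m | _].
set bin_cap := fun H : {set U} => 'C(#|H :&: G|, r).
have rich_bin H : H \in rich -> ((1 + eps / 2) * P) ^+ r * 'C(m, r)%:R <= (bin_cap H)%:R.
  rewrite inE => /andP[_ richH]; apply: ler_bin_scale; first by rewrite mulr_ge0 //; lra.
  by apply/ltW; apply: le_lt_trans richH; lra.
have moment : (\sum_(H in draws A m) bin_cap H)%:R <= P ^+ r * 'C(m, r)%:R * 'C(#|A|, m)%:R.
  rewrite mulrAC -mulrA -natrM mul_bin_bin // natrM mulrA.
  apply: le_trans (_ : ('C(#|G|, r) * 'C(#|A| - r, m - r))%:R <= _).
    by rewrite ler_nat sum_bin_cardI_draws.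
  by rewrite natrM ler_wpM2r ?ler0n // ler_bin_ratio // subset_leq_card.
have Pr_bin_gt0 : 0 < P ^+ r * 'C(m, r)%:R by rewrite mulr_gt0 ?exprn_gt0 // ltr0n bin_gt0.
rewrite -(ler_pM2l Pr_bin_gt0); apply: le_trans moment.
have -> : P ^+ r * 'C(m, r)%:R * ((1 + eps / 2) ^+ r * #|rich|%:R)
    = \sum_(H in rich) ((1 + eps / 2) * P) ^+ r * 'C(m, r)%:R.
  by rewrite sumr_const -mulr_natr exprMn; ring.
apply: le_trans (ler_sum _ rich_bin) _; rewrite -natr_sum ler_nat.
by apply: (@sub_le_big _ addn leq) => // [x y | H]; rewrite ?leq_addr // inE => /andP[].
Qed.

End BinomialEstimates.

Section Colourings.
Variables (R : realType) (a b n : nat) (calT : {set multiset a b}).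
Implicit Type C : {ffun 'I_n -> 'I_b}.

Definition good_edges C := [set e : {set 'I_n} | #|e| == a & edge_ok calT C e].

Lemma card_colour_profile C (t : 'I_b -> nat) :
  #|[set e : {set 'I_n} | [forall j, t j == #|[set v in e | C v == j]|]]|
    <= \prod_(j < b) 'C(ncol C j, t j).
Proof.
pose split_colours (e : {set 'I_n}) : {ffun 'I_b -> {set 'I_n}} :=
  [ffun j => [set v in e | C v == j]].
have inj_split : injective split_colours.
  move=> e1 e2 eq12; apply/setP => v.
  have := congr1 (fun f : {ffun 'I_b -> {set 'I_n}} => v \in f (C v)) eq12.
  by rewrite !ffunE !inE eqxx !andbT.
pose F j := draws [set v | C v == j] (t j).
have -> : \prod_(j < b) 'C(ncol C j, t j) = #|family (fun j => mem (F j))|.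
  rewrite card_family foldrE big_map big_enum; apply: eq_bigr => j _.
  by rewrite /F /draws cards_draws.
rewrite -(card_imset _ inj_split); apply/subset_leq_card/subsetP => f /imsetP[e].
rewrite inE => /forallP profile_e ->; apply/familyP => j.
rewrite /F /draws ffunE inE (eqP (profile_e j)) eqxx andbT.
by apply/subsetP => v; rewrite !inE => /andP[].
Qed.

Lemma card_good_edges C :
  #|good_edges C| <= \sum_(t in calT) \prod_(j < b) 'C(ncol C j, t j).
Proof.
pose profile (t : multiset a b) :=
  [set e : {set 'I_n} | [forall j, (t j : nat) == #|[set v in e | C v == j]|]].
apply: (@leq_trans (\sum_(t in calT) #|profile t|)); last first.
  by apply: leq_sum => t _; exact: card_colour_profile.
apply: leq_trans (leq_card_bigcup _ _); apply/subset_leq_card/subsetP => e.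
rewrite inE => /andP[_ /existsP[t /andP[tT profile_e]]].
by apply/bigcupP; exists t; rewrite // inE.
Qed.

Lemma pC_mul_bin C : a <= n ->
  (pC R calT C * 'C(n, a)%:R = (\sum_(t in calT) \prod_(j < b) 'C(ncol C j, t j))%:R)%R.
Proof.
move=> le_an; rewrite /pC mulr_suml natr_sum; apply: eq_bigr => t _.
by rewrite mulfVK ?natr_prod // pnatr_eq0 -lt0n bin_gt0.
Qed.

Lemma card_good_edges_le_pC C : a <= n ->
  (#|good_edges C|%:R <= pC R calT C * 'C(n, a)%:R)%R.
Proof. by move=> le_an; rewrite pC_mul_bin // ler_nat card_good_edges. Qed.

End Colourings.

Definition equitable_colouring n b (b_gt0 : 0 < b) : {ffun 'I_n -> 'I_b} :=
  [ffun v : 'I_n => Ordinal (ltn_pmod v b_gt0)].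

Lemma ncol_equitable n b (b_gt0 : 0 < b) (j : 'I_b) :
  n %/ b <= ncol (equitable_colouring n b_gt0) j.
Proof.
case: n => [|n]; first by rewrite div0n.
pose f (i : 'I_(n.+1 %/ b)) : 'I_n.+1 := inord (i * b + j).
have f_val i : f i = i * b + j :> nat.
  rewrite inordK //; have : i.+1 * b <= n.+1 by rewrite -leq_divRL.
  by rewrite mulSn; have := ltn_ord j; lia.
have f_inj : injective f.
  move=> i1 i2 /(congr1 val) /=; rewrite !f_val => /addIn /eqP.
  by rewrite eqn_pmul2r // => /eqP /val_inj.
rewrite -[X in X <= _]card_ord -(card_imset _ f_inj) /ncol.
apply/subset_leq_card/subsetP => v /imsetP[i _ ->].
by rewrite inE ffunE; apply/eqP/val_inj; rewrite /= f_val modnMDl modn_small.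
Qed.

Lemma leq_bin_prod_bin n a b (t m : 'I_b -> nat) : 0 < a -> 0 < b ->
  \sum_(j < b) t j = a -> (forall j, n %/ b <= m j) -> 2 * a * b <= n ->
  'C(n, a) <= (8 * b) ^ a * a`! ^ b * \prod_(j < b) 'C(m j, t j).
Proof.
move=> a_gt0 b_gt0 sum_t le_m le_n.
have le_ta j : t j <= a by rewrite -sum_t (bigD1 j) //= leq_addr.
set q := n %/ b %/ 2.
have le_qm j : q <= m j - t j.
  have : 2 * a <= n %/ b by rewrite leq_divRL.
  have := leq_divM (n %/ b) 2; have := le_m j; have := le_ta j; lia.
have le_n8bq : n <= 8 * b * q.
  have := ltn_ceil n b_gt0; have := ltn_ceil (n %/ b) (isT : 0 < 2).
  have : 2 * a <= n %/ b by rewrite leq_divRL.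
  rewrite -/q; nia.
have -> : a`! ^ b = \prod_(j < b) a`! by rewrite prod_nat_const card_ord.
rewrite -mulnA -big_split /=.
apply: leq_trans (_ : (8 * b * q) ^ a <= _).
  apply: leq_trans (_ : n ^ a <= _); last by rewrite leq_exp2r.
  by apply: leq_trans (leq_ffact_exp n a); rewrite -bin_ffact leq_pmulr ?fact_gt0.
rewrite expnMn leq_mul2l -[in q ^ a]sum_t expn_sum; apply/orP; right.
apply: leq_prod => j _.
apply: leq_trans (leq_exp_ffact (le_qm j)) _.
by rewrite -bin_ffact mulnC leq_mul2r leq_fact ?orbT.
Qed.

Lemma pC_equitable_ge (R : realType) a b n (calT : {set multiset a b}) (b_gt0 : 0 < b)
    (t : multiset a b) :
  0 < a -> is_amultiset t -> t \in calT -> 2 * a * b <= n ->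
  ((((8 * b) ^ a * a`! ^ b)%:R)^-1 <= pC R calT (equitable_colouring n b_gt0))%R.
Proof.
move=> a_gt0 /eqP sum_t tT le_n; set K := (8 * b) ^ a * a`! ^ b.
have le_an : a <= n by nia.
have K_gt0 : (0 < K%:R :> R)%R by rewrite ltr0n muln_gt0 !expn_gt0 fact_gt0 muln_gt0 b_gt0.
have bin_gt0R : (0 < 'C(n, a)%:R :> R)%R by rewrite ltr0n bin_gt0.
rewrite -(ler_pM2r bin_gt0R) pC_mul_bin // -(ler_pM2l K_gt0) mulrA mulfV ?gt_eqF // mul1r.
rewrite -natrM ler_nat; apply: leq_trans (leq_bin_prod_bin a_gt0 b_gt0 sum_t
  (ncol_equitable n b_gt0) le_n) _.
by rewrite leq_mul2l (bigD1 t) //= leq_addr orbT.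
Qed.

Lemma hypergraphsE a n m : hypergraphs a n m = draws [set e : {set 'I_n} | #|e| == a] m.
Proof.
apply/setP => H; rewrite !inE; congr (_ && _).
apply/forallP/subsetP => [uH e eH | sH e]; first by rewrite inE (implyP (uH e)).
by apply/implyP => /sH; rewrite inE.
Qed.

Lemma q_attained a b n (calT : {set multiset a b}) (H : {set {set 'I_n}}) :
  0 < b -> H \subset [set e : {set 'I_n} | #|e| == a] ->
  exists C, q calT H = #|H :&: good_edges calT C|.
Proof.
move=> b_gt0 /subsetP uH; rewrite /q.
have [|C ->] := bigop.eq_bigmax (fun C => #|[set e in H | edge_ok calT C e]|).
  by rewrite card_ffun !card_ord expn_gt0 b_gt0.
exists C; apply: eq_card => e; rewrite !inE.
by case eH: (e \in H) => //=; have := uH e eH; rewrite inE => ->.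
Qed.

Lemma q_set0 a b n (H : {set {set 'I_n}}) : q (set0 : {set multiset a b}) H = 0.
Proof.
apply/eqP; rewrite -leqn0; apply/bigmax_leqP => C _; rewrite leqn0 cards_eq0.
by apply/eqP/setP => e; rewrite !inE /edge_ok andbC; case: existsP => // -[t]; rewrite inE.
Qed.

Lemma card_bad_hypergraphs (R : realType) a b n m (calT : {set multiset a b}) (P eps : R) r :
  0 < b -> a <= n -> (0 < P)%R -> (0 < eps)%R ->
  (forall C : {ffun 'I_n -> 'I_b}, (pC R calT C <= P)%R) ->
  r <= m -> (r%:R <= eps * P * m%:R / 2)%R ->
  ((1 + eps / 2) ^+ r *
     #|[set H in hypergraphs a n m | ~~ ((q calT H)%:R <= P * m%:R * (1 + eps))%R]|%:R
    <= (b ^ n)%:R * #|hypergraphs a n m|%:R)%R.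
Proof.
move=> b_gt0 le_an P_gt0 eps_gt0 le_pC le_rm le_r.
set A := [set e : {set 'I_n} | #|e| == a].
have cardA : #|A| = 'C(n, a) by rewrite card_draws card_ord.
set rich := fun C =>
  [set H in draws A m | P * m%:R * (1 + eps) < #|H :&: good_edges calT C|%:R]%R.
have bad_sub : [set H in hypergraphs a n m | ~~ ((q calT H)%:R <= P * m%:R * (1 + eps))%R]
    \subset \bigcup_C rich C.
  apply/subsetP => H; rewrite inE hypergraphsE -ltNge => /andP[HA].
  have sHA : H \subset A by move: HA; rewrite inE => /andP[].
  have [C ->] := q_attained calT b_gt0 sHA.
  by move=> richH; apply/bigcupP; exists C; rewrite // inE HA.
have rich_le C : ((1 + eps / 2) ^+ r * #|rich C|%:R <= 'C(#|A|, m)%:R)%R.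
  apply: card_rich_draws => //; first by apply/subsetP => e; rewrite !inE => /andP[].
    by rewrite cardA bin_gt0.
  apply: le_trans (card_good_edges_le_pC R calT C le_an) _.
  by rewrite cardA ler_wpM2r ?ler0n ?le_pC.
have c_ge0 : (0 <= (1 + eps / 2) ^+ r)%R by rewrite exprn_ge0 //; lra.
apply: le_trans (_ : (1 + eps / 2) ^+ r * (\sum_C #|rich C|)%:R <= _)%R.
  by rewrite ler_wpM2l // ler_nat (leq_trans (subset_leq_card bad_sub)) ?leq_card_bigcup.
rewrite natr_sum mulr_sumr; apply: le_trans (ler_sum _ (fun C _ => rich_le C)) _.
by rewrite sumr_const card_ffun !card_ord hypergraphsE /draws cards_draws mulr_natl.
Qed.

Lemma leq_expnM_exp2 b n D : D <= n -> b ^ n * D <= 2 ^ (b.+1 * n).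
Proof.
move=> le_Dn; rewrite mulSn expnD mulnC expnM; apply: leq_mul.
  exact: leq_trans le_Dn (ltnW (ltn_expl n (ltnSn 1))).
by case: n {le_Dn} => // n; rewrite leq_exp2r // ltnW // ltn_expl.
Qed.

Section Growth.
Variable R : archiRealFieldType.
Local Open Scope ring_scope.

Lemma bernoulli_ineq (x : R) k : 0 <= x -> 1 + k%:R * x <= (1 + x) ^+ k.
Proof.
move=> x_ge0; elim: k => [|k IH]; first by rewrite mul0r addr0 expr0.
have kx_ge0 : 0 <= k%:R * x by rewrite mulr_ge0 ?ler0n.
rewrite exprS -natr1; apply: le_trans (ler_wpM2l _ IH); nra.
Qed.

Lemma exp2_le_exprD1 (x : R) j r : 0 <= x -> 1 <= j%:R * x -> 2 ^+ (r %/ j) <= (1 + x) ^+ r.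
Proof.
move=> x_ge0 jx_ge1.
have le2 : 2 <= (1 + x) ^+ j by apply: le_trans (bernoulli_ineq j x_ge0); lra.
apply: le_trans (_ : ((1 + x) ^+ j) ^+ (r %/ j) <= _).
  by rewrite lerXn2r ?nnegrE // (le_trans _ le2).
by rewrite -exprM ler_weXn2l ?lerDl // mulnC leq_divM.
Qed.

Lemma exists_exp_growth (x delta : R) : 0 < x -> 0 < delta ->
  exists j D : nat, forall b n r, (D <= n)%N -> (j * (b.+1 * n) <= r)%N ->
    (b ^ n)%:R <= delta * (1 + x) ^+ r.
Proof.
move=> x_gt0 delta_gt0; pose j := Num.bound x^-1; pose D := Num.bound delta^-1.
exists j, D => b n r le_Dn le_r.
have jx_ge1 : 1 <= j%:R * x.
  by rewrite -ler_pdivrMr // mul1r ltW // archi_boundP // invr_ge0 ltW.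
have Ddelta_ge1 : 1 <= D%:R * delta.
  by rewrite -ler_pdivrMr // mul1r ltW // archi_boundP // invr_ge0 ltW.
apply: le_trans (_ : delta * (b ^ n * D)%:R <= _).
  by rewrite natrM mulrCA ler_peMr ?ler0n // mulrC.
rewrite ler_pM2l // (le_trans _ (exp2_le_exprD1 r (ltW x_gt0) jx_ge1)) //.
rewrite -natrX ler_nat (leq_trans (leq_expnM_exp2 _ le_Dn)) // leq_pexp2l //.
have j_gt0 : (0 < j)%N by rewrite lt0n; apply: contraTneq jx_ge1 => ->; rewrite mul0r ler10.
by rewrite leq_divRL // mulnC.
Qed.

Lemma exists_divn_le_mul (c : R) : 0 < c ->
  exists2 L : nat, (0 < L)%N & forall m (y : R), c <= y -> (m %/ L)%:R <= y * m%:R.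
Proof.
move=> c_gt0; pose L := Num.bound c^-1; exists L => [|m y le_cy].
  by rewrite -(ltr_nat R) (le_lt_trans _ (archi_boundP _)) ?invr_ge0 ?ltW.
have yL_ge1 : 1 <= y * L%:R.
  apply: le_trans (_ : c * L%:R <= _); last by rewrite ler_wpM2r ?ler0n.
  by rewrite mulrC -ler_pdivrMr // mul1r ltW // archi_boundP // invr_ge0 ltW.
apply: le_trans (_ : (m %/ L)%:R * (y * L%:R) <= _); first by rewrite ler_peMr ?ler0n.
by rewrite mulrCA -natrM ler_wpM2l ?(le_trans (ltW c_gt0)) // ler_nat leq_divM.
Qed.

End Growth.

Theorem lemma12 (R : realType) (a b : nat) (ha : (2 <= a)%N) (hb : (2 <= b)%N)
  (eps : R) (heps : (0 < eps)%R)
  (calT : {set multiset a b}) (hT : forall t, t \in calT -> is_amultiset t)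
  (m : nat -> nat)
  (hm : forall K : nat, exists N : nat, forall n : nat, (N <= n)%N -> (K * n <= m n)%N)
  (CM : forall n : nat, {ffun 'I_n -> 'I_b})
  (hCM : forall (n : nat) (C : {ffun 'I_n -> 'I_b}),
           (pC R calT C <= pC R calT (CM n))%R) :
  forall delta : R, (0 < delta)%R ->
  exists N : nat, forall n : nat, (N <= n)%N ->
    ((#|[set H in hypergraphs a n (m n) |
         ~~ ((q calT H)%:R <= pC R calT (CM n) * (m n)%:R * (1 + eps))%R]|)%:R
     <= delta * (#|hypergraphs a n (m n)|)%:R)%R.
Proof.
move=> delta delta_gt0.
have [->|[t0 t0T]] := set_0Vmem calT.
  exists 0%N => n _; apply: le_trans (_ : 0%:R <= _)%R; last by rewrite mulr_ge0 // ltW.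
  rewrite ler_nat leqn0 cards_eq0; apply/eqP/setP => H.
  by rewrite !inE q_set0 /pC big_set0 !mul0r lexx andbF.
have a_gt0 : (0 < a)%N by apply: leq_trans ha.
have b_gt0 : (0 < b)%N by apply: leq_trans hb.
pose K := ((8 * b) ^ a * a`! ^ b)%N.
have K_gt0 : (0 < K%:R :> R)%R by rewrite ltr0n muln_gt0 !expn_gt0 fact_gt0 muln_gt0 b_gt0.
have eps2_gt0 : (0 < eps / 2)%R by rewrite divr_gt0.
have [L L_gt0 divL] := exists_divn_le_mul (divr_gt0 eps2_gt0 K_gt0).
have [j [D growth]] := exists_exp_growth eps2_gt0 delta_gt0.
have [N1 hN1] := hm (L * j * b.+1).
exists (maxn N1 (maxn (2 * a * b) D)) => n; rewrite !geq_max => /and3P[le_N1 le_ab le_D].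
set P := pC R calT (CM n); set r := (m n %/ L)%N.
have P_ge : (K%:R^-1 <= P)%R.
  exact: le_trans (pC_equitable_ge R b_gt0 a_gt0 (hT t0 t0T) t0T le_ab) (hCM n _).
have P_gt0 : (0 < P)%R by apply: lt_le_trans P_ge; rewrite invr_gt0.
have le_r : (r%:R <= eps * P * (m n)%:R / 2)%R.
  by rewrite mulrAC [(eps * P / 2)%R]mulrAC divL // ler_pM2l.
have le_jr : (j * (b.+1 * n) <= r)%N by rewrite leq_divRL // mulnC !mulnA hN1.
have le_an : (a <= n)%N by nia.
have c_gt0 : (0 < (1 + eps / 2) ^+ r)%R by rewrite exprn_gt0 //; lra.
have := card_bad_hypergraphs b_gt0 le_an P_gt0 heps (hCM n) (leq_div _ _) le_r.
rewrite -/r => bad_le; rewrite -(ler_pM2l c_gt0); apply: le_trans bad_le _.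
by rewrite mulrA [(_ * delta)%R]mulrC; apply: ler_wpM2r; [exact: ler0n | exact: growth].
Qed.
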